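(* Let $\mathbb{H}$ be the real quaternion algebra and $R=\mathbb{H}[t_1,\ldots,t_n]$ the ring of polynomials in $n$ central commuting variables over $\mathbb{H}$. Let $M$ be a two-sided ideal of $R$ which is maximal as a left ideal. Then there exist $a_1,\ldots,a_n\in\mathbb{R}$ such that $t_1-a_1,\ldots,t_n-a_n$ generate $M$. *)

From HB Require Import structures.
From mathcomp Require Import all_boot all_order all_algebra.
From mathcomp Require Import ring.
From mathcomp Require Import mpoly.
From mathcomp Require Import reals.

Set Implicit Arguments.
Unset Strict Implicit.
Unset Printing Implicit Defensive.

Import Order.TTheory GRing.Theory Num.Theory.
Local Open Scope ring_scope.

(* The real quaternion algebra H = R + R i + R j + R k                *)
(* with i^2 = j^2 = k^2 = ijk = -1.                                   *)
Section Quaternions.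
Variable R : realType.

Record quat := Quat { q0 : R; q1 : R; q2 : R; q3 : R }.

Definition quat2tuple (x : quat) := (q0 x, q1 x, q2 x, q3 x).
Definition tuple2quat (t : R * R * R * R) :=
  let: (a, b, c, d) := t in Quat a b c d.
Lemma quat2tupleK : cancel quat2tuple tuple2quat. Proof. by case. Qed.

HB.instance Definition _ := Equality.copy quat (can_type quat2tupleK).
HB.instance Definition _ := Choice.copy quat (can_type quat2tupleK).

Definition qadd (x y : quat) :=
  Quat (q0 x + q0 y) (q1 x + q1 y) (q2 x + q2 y) (q3 x + q3 y).
Definition qopp (x : quat) := Quat (- q0 x) (- q1 x) (- q2 x) (- q3 x).
Definition qzero := Quat 0 0 0 0.
Definition qone := Quat 1 0 0 0.
Definition qmul (x y : quat) :=
  Quat (q0 x * q0 y - q1 x * q1 y - q2 x * q2 y - q3 x * q3 y)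
       (q0 x * q1 y + q1 x * q0 y + q2 x * q3 y - q3 x * q2 y)
       (q0 x * q2 y - q1 x * q3 y + q2 x * q0 y + q3 x * q1 y)
       (q0 x * q3 y + q1 x * q2 y - q2 x * q1 y + q3 x * q0 y).

Lemma qaddA : associative qadd.
Proof. by case=> ? ? ? ? [? ? ? ?] [? ? ? ?]; rewrite /qadd /= !addrA. Qed.
Lemma qaddC : commutative qadd.
Proof. by case=> ? ? ? ? [? ? ? ?]; rewrite /qadd /=; congr Quat; exact: addrC. Qed.
Lemma qadd0 : left_id qzero qadd.
Proof. by case=> ? ? ? ?; rewrite /qadd /= !add0r. Qed.
Lemma qaddN : left_inverse qzero qopp qadd.
Proof. by case=> ? ? ? ?; rewrite /qadd /= !addNr. Qed.

HB.instance Definition _ := GRing.isZmodule.Build quat qaddA qaddC qadd0 qaddN.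

Lemma qmulA : associative qmul.
Proof. by case=> ? ? ? ? [? ? ? ?] [? ? ? ?]; rewrite /qmul /=; congr Quat; ring. Qed.
Lemma qmul1 : left_id qone qmul.
Proof. by case=> ? ? ? ?; rewrite /qmul /=; congr Quat; ring. Qed.
Lemma qmulr1 : right_id qone qmul.
Proof. by case=> ? ? ? ?; rewrite /qmul /=; congr Quat; ring. Qed.
Lemma qmulDl : left_distributive qmul qadd.
Proof. by case=> ? ? ? ? [? ? ? ?] [? ? ? ?]; rewrite /qmul /qadd /=; congr Quat; ring. Qed.
Lemma qmulDr : right_distributive qmul qadd.
Proof. by case=> ? ? ? ? [? ? ? ?] [? ? ? ?]; rewrite /qmul /qadd /=; congr Quat; ring. Qed.
Lemma qone_neq0 : qone != qzero.
Proof. by apply/eqP => -[] /eqP; rewrite oner_eq0. Qed.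

HB.instance Definition _ :=
  GRing.Zmodule_isRing.Build quat qmulA qmul1 qmulr1 qmulDl qmulDr qone_neq0.

Definition qreal (a : R) : quat := Quat a 0 0 0.

End Quaternions.

Section Ideals.
Variable T : pzRingType.

Definition is_left_ideal (I : T -> Prop) : Prop :=
  [/\ I 0, (forall x y, I x -> I y -> I (x + y)) & (forall r x, I x -> I (r * x))].

Definition is_twosided_ideal (I : T -> Prop) : Prop :=
  is_left_ideal I /\ (forall r x, I x -> I (x * r)).

Definition is_maximal_left_ideal (I : T -> Prop) : Prop :=
  [/\ is_left_ideal I, (exists x, ~ I x) &
      (forall J : T -> Prop, is_left_ideal J -> (forall x, I x -> J x) ->
         (forall x, J x <-> I x) \/ (forall x, J x))].

Definition left_ideal_gen (n : nat) (g : 'I_n -> T) (x : T) : Prop :=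
  exists c : 'I_n -> T, x = \sum_(i < n) c i * g i.

End Ideals.

(* Modulo a two-sided ideal [M] that is maximal as a left ideal, every element
   outside [M] has a left inverse and [M] is completely prime.  Each [t_i] is
   algebraic over the reals modulo [M]: otherwise the inverses of the [t_i - a],
   [a] real, would give uncountably many classes linearly independent over the
   reals, whereas the polynomials of bounded size form finite-dimensional real
   spaces exhausting the countably generated quotient.  Factoring the resulting
   polynomial over [C], a subfield of [H] commuting with [t_i], and using
   primality puts some [t_i - z] in [M]; as [M] contains no nonzero constant, [z]
   commutes with all of [H], so it is real.  Finally every polynomial is
   congruent to a constant modulo the [t_i - a_i], so these generate [M]. *)

From HB Require Import structures.
From mathcomp Require Import all_boot all_order all_algebra.
From mathcomp Require Import ring lra.
From mathcomp Require Import mpoly.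
From mathcomp Require Import complex.
From mathcomp Require Import finmap boolp classical_sets cardinality reals ereal.
From mathcomp Require Import measure lebesgue_measure.
Import Order.TTheory GRing.Theory Num.Theory.
Local Open Scope ring_scope.
Set Implicit Arguments.
Unset Strict Implicit.
Unset Printing Implicit Defensive.

Section LeftIdeal.
Variables (T : pzRingType) (M : T -> Prop).
Hypothesis hM : is_left_ideal M.

Lemma left_ideal0 : M 0. Proof. by case: hM. Qed.

Lemma left_idealD x y : M x -> M y -> M (x + y).
Proof. by case: hM => _ hD _; apply: hD. Qed.

Lemma left_idealMl r x : M x -> M (r * x).
Proof. by case: hM => _ _ hMl; apply: hMl. Qed.

Lemma left_idealN x : M x -> M (- x).
Proof. by move=> /(left_idealMl (-1)); rewrite mulN1r. Qed.

Lemma left_idealB x y : M x -> M y -> M (x - y).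
Proof. by move=> Mx /left_idealN; apply: left_idealD. Qed.

Lemma left_ideal_sum (I : Type) (r : seq I) (P : pred I) (F : I -> T) :
  (forall i, P i -> M (F i)) -> M (\sum_(i <- r | P i) F i).
Proof. by move=> MF; apply: big_ind => //; [exact: left_ideal0 | exact: left_idealD]. Qed.

End LeftIdeal.

Lemma twosided_idealMr (T : pzRingType) (M : T -> Prop) :
  is_twosided_ideal M -> forall r x, M x -> M (x * r).
Proof. by case. Qed.

Section MaximalIdeal.
Variables (T : pzRingType) (M : T -> Prop).
Hypothesis hMx : is_maximal_left_ideal M.
Let hM : is_left_ideal M. Proof. by case: hMx. Qed.

Lemma maximal_left_idealN1 : ~ M 1.
Proof. by case: hMx => _ [x Nx] _ M1; apply: Nx; rewrite -[x]mulr1; exact: left_idealMl. Qed.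

(* [M + T x] is a left ideal strictly containing [M], hence everything. *)
Lemma maximal_left_ideal_invl x : ~ M x -> exists u, M (u * x - 1).
Proof.
move=> Nx; case: hMx => _ _ /(_ (fun y => exists m u, M m /\ y = m + u * x)) hJ.
have [||JM|J1] := hJ.
- split.
  + by exists 0, 0; rewrite mul0r addr0; split => //; exact: left_ideal0.
  + move=> _ _ [m [u [Mm ->]]] [m' [u' [Mm' ->]]]; exists (m + m'), (u + u').
    by rewrite mulrDl addrACA; split => //; exact: left_idealD.
  + move=> r _ [m [u [Mm ->]]]; exists (r * m), (r * u).
    by rewrite mulrDr mulrA; split => //; exact: left_idealMl.
- by move=> y My; exists y, 0; rewrite mul0r addr0.
- by exfalso; apply/Nx/JM; exists 0, 1; rewrite add0r mul1r; split => //; exact: left_ideal0.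
have [m [u [Mm e1]]] := J1 1; exists u.
by rewrite -[u * x](addKr m) -e1 addrK; exact: left_idealN.
Qed.

Hypothesis hM2 : is_twosided_ideal M.

Lemma twosided_maximal_ideal_prime x y : M (x * y) -> ~ M x -> M y.
Proof.
move=> Mxy /maximal_left_ideal_invl [u Mu].
have -> : y = u * (x * y) - (u * x - 1) * y by rewrite mulrBl mul1r mulrA opprB addrC subrK.
by apply: (left_idealB hM); [exact: left_idealMl | exact: (twosided_idealMr hM2)].
Qed.

Lemma twosided_maximal_ideal_prod (I : Type) (r : seq I) (F : I -> T) :
  M (\prod_(i <- r) F i) -> exists i, M (F i).
Proof.
elim: r => [|i r IHr]; first by rewrite big_nil => /maximal_left_idealN1.
rewrite big_cons => MFr; have [MFi|NFi] := pselect (M (F i)); first by exists i.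
exact/IHr/(twosided_maximal_ideal_prime MFr).
Qed.

End MaximalIdeal.

Section LeftIdealGen.
Variables (T : pzRingType) (m : nat) (g : 'I_m -> T).
Local Notation L := (left_ideal_gen g).

Lemma left_ideal_gen_left_ideal : is_left_ideal L.
Proof.
split.
- by exists (fun=> 0); rewrite big1 // => i _; rewrite mul0r.
- move=> _ _ [c ->] [d ->]; exists (fun i => c i + d i).
  by rewrite -big_split; apply: eq_bigr => i _; rewrite mulrDl.
- move=> r _ [c ->]; exists (fun i => r * c i).
  by rewrite mulr_sumr; apply: eq_bigr => i _; rewrite mulrA.
Qed.

Lemma left_ideal_gen_mem i : L (g i).
Proof.
exists (fun k => (k == i)%:R); rewrite (bigD1 i) //= eqxx mul1r big1 ?addr0 //.
by move=> k /negbTE ->; rewrite mul0r.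
Qed.

Lemma left_ideal_gen_min (I : T -> Prop) :
  is_left_ideal I -> (forall i, I (g i)) -> forall x, L x -> I x.
Proof.
move=> hI Ig _ [c ->]; apply: left_ideal_sum => // i _.
exact: left_idealMl.
Qed.

Lemma left_ideal_gen_central :
  (forall i x, g i * x = x * g i) -> is_twosided_ideal L.
Proof.
move=> gC; split; first exact: left_ideal_gen_left_ideal.
move=> r _ [c ->]; exists (fun i => c i * r).
by rewrite mulr_suml; apply: eq_bigr => i _; rewrite -!mulrA gC.
Qed.

End LeftIdealGen.

Section Quaternions.
Variable R : realType.
Local Notation H := (quat R).

Lemma qreal_central (a : R) (x : H) : qreal a * x = x * qreal a.
Proof. by case: x => ????; congr Quat => /=; ring. Qed.

Lemma quat_center (c : H) : (forall d, c * d = d * c) -> c = qreal (q0 c).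
Proof.
case: c => a b c d cC.
move: (cC (Quat 0 1 0 0)) (cC (Quat 0 0 1 0)) => [_ _ hd hc] [_ _ _ hb].
by rewrite /qreal /=; congr Quat; lra.
Qed.

(* The inverse of [x] is its conjugate divided by its squared norm. *)
Lemma quat_invl (x : H) : x != 0 -> exists y, y * x = 1.
Proof.
case: x => a b c d x0; pose s := a ^+ 2 + b ^+ 2 + c ^+ 2 + d ^+ 2.
have s0 : s != 0.
  apply: contra x0; rewrite !paddr_eq0 ?addr_ge0 ?sqr_ge0 // !sqrf_eq0.
  by move=> /andP[/andP[/andP[/eqP-> /eqP->] /eqP->] /eqP->].
exists (Quat (a / s) (- b / s) (- c / s) (- d / s)).
by congr Quat => /=; rewrite /s in s0 *; field.
Qed.

Definition qcomplex (z : R[i]) : H := let: Complex a b := z in Quat a b 0 0.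

Lemma qcomplex_is_additive : additive qcomplex.
Proof. by case=> a b [c d]; congr Quat => /=; ring. Qed.
HB.instance Definition _ := GRing.isAdditive.Build _ _ qcomplex qcomplex_is_additive.

Lemma qcomplex_is_multiplicative : multiplicative qcomplex.
Proof. by split => // -[a b] [c d]; congr Quat => /=; ring. Qed.
HB.instance Definition _ :=
  GRing.isMultiplicative.Build _ _ qcomplex qcomplex_is_multiplicative.

Lemma qcomplex_real (a : R) : qcomplex a%:C%C = qreal a. Proof. by []. Qed.

Definition quat_coords (x : H) : 'rV[R]_4 := \row_k [:: q0 x; q1 x; q2 x; q3 x]`_k.

Lemma quat_coords_is_additive : additive quat_coords.
Proof.
move=> [????] [????]; apply/rowP => k; rewrite !mxE.
by case: k => -[|[|[|[|k]]]] //= _; rewrite nth_nil subr0.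
Qed.
HB.instance Definition _ :=
  GRing.isAdditive.Build _ _ quat_coords quat_coords_is_additive.

Lemma quat_coords_qrealM (a : R) (x : H) : quat_coords (qreal a * x) = a *: quat_coords x.
Proof.
case: x => ????; apply/rowP => k; rewrite !mxE.
by case: k => -[|[|[|[|k]]]] /= _; rewrite ?nth_nil ?mulr0 //; ring.
Qed.

Lemma quat_coords_eq0 (x : H) : quat_coords x = 0 -> x = 0.
Proof.
case: x => a b c d /rowP x0.
by move: (x0 0) (x0 1) (x0 2) (x0 3); rewrite !mxE /= => -> -> -> ->.
Qed.

End Quaternions.

Lemma mpolyC_central (T : nzRingType) (n : nat) (c : T) :
  (forall x, c * x = x * c) -> forall p : {mpoly T[n]}, c%:MP * p = p * c%:MP.
Proof.
move=> cC; elim/mpolyind => [|d m p _ _ IHp]; first by rewrite mulr0 mul0r.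
rewrite mulrDr mulrDl IHp -!mul_mpolyC mulrA -mpolyCM cC mpolyCM.
by rewrite -!mulrA commr_mpolyX.
Qed.

Lemma kermx_tall_neq0 (F : fieldType) (m : nat) (A : 'M[F]_(m.+1, m)) : kermx A != 0.
Proof. by rewrite kermx_eq0 /row_free neq_ltn ltnS rank_leq_col. Qed.

(* Evaluation at [a j0] kills every term but the [j0]-th one. *)
Lemma lagrange_comb_neq0 (F : idomainType) (m : nat) (a c : 'I_m -> F) (j0 : 'I_m) :
  injective a -> c j0 != 0 ->
  \sum_j c j *: \prod_(k | k != j) ('X - (a k)%:P) != 0.
Proof.
move=> a_inj cj0; apply/negP => /eqP /(congr1 (horner^~ (a j0))).
have vanish j : j != j0 -> (c j *: \prod_(k | k != j) ('X - (a k)%:P)).[a j0] = 0.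
  by move=> jj0; rewrite hornerZ horner_prod (bigD1 j0) 1?eq_sym //= hornerXsubC subrr mul0r mulr0.
rewrite horner0 horner_sum (bigD1 j0) //= [X in _ + X]big1 ?addr0; last exact: vanish.
rewrite hornerZ horner_prod => /eqP; rewrite mulf_eq0 (negbTE cj0) /=.
apply/negP/prodf_neq0 => k kj0; rewrite hornerXsubC subr_eq0.
by apply: contra kj0 => /eqP /a_inj ->.
Qed.

Lemma real_uncountable (R : realType) : ~ countable [set: R]%classic.
Proof.
move=> /countable_lebesgue_measure0 lebT0.
have := le_measure (@lebesgue_measure R) (mem_set (measurable_itv `[0, 1]))
  (mem_set measurableT) (subsetT _).
change ((@lebesgue_measure R `[0%R, 1%R]%classic <= @lebesgue_measure R setT)%E -> False).
by rewrite lebT0 lebesgue_measure_itv /= lte_fin ltr01 oppr0 adde0 lee_fin ler10.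
Qed.

Lemma uncountable_bounded_fiber (T : Type) (f : T -> nat) :
  ~ countable [set: T]%classic -> exists N, infinite_set [set x | (f x <= N)%N]%classic.
Proof.
move=> NcT; apply: contrapT => /forallNP finf; apply: NcT.
have -> : [set: T]%classic = (\bigcup_(N in [set: nat]) [set x | (f x <= N)%N])%classic.
  by apply/seteqP; split => [x _|//]; rewrite /bigcup /=; exists (f x).
apply: bigcup_countable => [|N _]; first exact: countableP.
by apply: finite_set_countable; apply: contrapT; apply: finf.
Qed.

Lemma infinite_set_injective (T : choiceType) (A : set T) (m : nat) :
  infinite_set A -> exists2 a : 'I_m -> T, injective a & forall j, A (a j).
Proof.
move=> Ainf; have [x0 _] := infinite_setN0 Ainf.
have [B BA leBm] := infinite_set_fset m Ainf.
have lt_size (j : 'I_m) : (j < size B)%N := leq_trans (ltn_ord j) leBm.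
exists (fun j => nth x0 B j).
  by move=> j k /eqP; rewrite nth_uniq ?lt_size ?fset_uniq // => /eqP /val_inj.
by move=> j; apply: BA; rewrite /= mem_nth ?lt_size.
Qed.

Section Coordinates.
Variables (R : realType) (n N : nat).
Local Notation H := (quat R).
Local Notation P := {mpoly H[n]}.
Local Notation K := (#|{: 'X_{1..n < N}}| * 4)%N.

Definition mpoly_coords (p : P) : 'rV[R]_K :=
  mxvec (\matrix_i quat_coords p@_(enum_val i : 'X_{1..n < N})).

Lemma mpoly_coords_is_additive : additive mpoly_coords.
Proof.
move=> p q; rewrite /mpoly_coords -linearB; congr mxvec.
by apply/matrixP => i k; rewrite [LHS]mxE mcoeffB raddfB !mxE.
Qed.
HB.instance Definition _ :=
  GRing.isAdditive.Build _ _ mpoly_coords mpoly_coords_is_additive.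

Lemma mpoly_coords_qrealM (a : R) (p : P) :
  mpoly_coords ((qreal a)%:MP * p) = a *: mpoly_coords p.
Proof.
rewrite /mpoly_coords -linearZ; congr mxvec.
by apply/matrixP => i k; rewrite [LHS]mxE mcoeffCM quat_coords_qrealM !mxE.
Qed.

Lemma mpoly_coords_eq0 (p : P) : (msize p <= N)%N -> mpoly_coords p = 0 -> p = 0.
Proof.
move=> szp /eqP; rewrite mxvec_eq0 => /eqP /row_matrixP p0.
apply/mpolyP => m; rewrite mcoeff0; have [ltmN|] := ltnP (mdeg m) N.
  have := p0 (enum_rank (BMultinom ltmN)); rewrite rowK row0 enum_rankK.
  exact: quat_coords_eq0.
by move=> /(leq_trans szp) /msize_mdeg_ge /memN_msupp_eq0.
Qed.

(* Polynomials of size at most [N] form a real vector space of dimension [K]. *)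
Lemma mpoly_bounded_lin_dep (u : 'I_K.+1 -> P) : (forall j, msize (u j) <= N)%N ->
  exists2 c : 'rV[R]_K.+1, c != 0 & \sum_j (qreal (c 0 j))%:MP * u j = 0.
Proof.
move=> szu; pose A := \matrix_j mpoly_coords (u j).
have /rowV0Pn [c /sub_kermxP cA c0] := kermx_tall_neq0 A.
exists c => //; apply: mpoly_coords_eq0.
  apply: leq_trans (msize_sum _ _ _) _; apply/bigmax_leqP => j _.
  by rewrite mul_mpolyC (leq_trans (msizeZ_le _ _)).
rewrite raddf_sum -[RHS]cA mulmx_sum_row; apply: eq_bigr => j _.
by rewrite rowK; apply: mpoly_coords_qrealM.
Qed.

End Coordinates.

Section Evaluation.
Variables (R : realType) (n : nat) (i : 'I_n).
Local Notation H := (quat R).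
Local Notation P := {mpoly H[n]}.

Definition mpolyC_qcomplex : {rmorphism R[i] -> P} := @mpolyC n H \o @qcomplex R.

Lemma commr_mpolyX_qcomplex : commr_rmorph mpolyC_qcomplex 'X_i.
Proof. by move=> z; apply/esym/commr_mpolyX. Qed.

Definition evalX : {rmorphism {poly R[i]} -> P} := horner_morph commr_mpolyX_qcomplex.

Lemma evalXC (z : R[i]) : evalX z%:P = (qcomplex z)%:MP.
Proof. exact: horner_morphC. Qed.

Lemma evalX_XsubC (z : R[i]) : evalX ('X - z%:P) = 'X_i - (qcomplex z)%:MP.
Proof. by rewrite rmorphB /= horner_morphX evalXC. Qed.

End Evaluation.

Arguments evalX {R n} i.

Lemma mpoly_congr_const (T : nzRingType) (n : nat) (a : 'I_n -> T) :
  (forall i x, a i * x = x * a i) ->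
  forall p : {mpoly T[n]}, exists c, left_ideal_gen (fun i => 'X_i - (a i)%:MP) (p - c%:MP).
Proof.
move=> aC p; set L := left_ideal_gen _.
have hL : is_twosided_ideal L.
  apply: left_ideal_gen_central => i x.
  by rewrite mulrBl mulrBr -commr_mpolyX (mpolyC_central (aC i)).
have hL1 := hL.1; pose S q := exists c, L (q - c%:MP).
have SC c : S c%:MP by exists c; rewrite subrr; exact: (left_ideal0 hL1).
have SD q r : S q -> S r -> S (q + r).
  move=> [c Lq] [d Lr]; exists (c + d).
  by rewrite mpolyCD opprD addrACA; exact: (left_idealD hL1).
have SM q r : S q -> S r -> S (q * r).
  move=> [c Lq] [d Lr]; exists (c * d).
  have -> : q * r - (c * d)%:MP = q * (r - d%:MP) + (q - c%:MP) * d%:MP.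
    by rewrite mulrBr mulrBl mpolyCM addrA subrK.
  by apply: (left_idealD hL1); [exact: left_idealMl | exact: (twosided_idealMr hL)].
have SX i k : S ('X_i ^+ k).
  elim: k => [|k IHk]; first by rewrite expr0 -mpolyC1; apply: SC.
  by rewrite exprS; apply: SM IHk; exists (a i); apply: left_ideal_gen_mem.
elim/mpolyind: p => [|c m p _ _ Sp]; first by rewrite -mpolyC0; apply: SC.
apply: SD Sp; rewrite -mul_mpolyC mpolyXE_id; apply: (SM _ _ (SC c)).
by apply: big_ind => [||i _]; [rewrite -mpolyC1; apply: SC | exact: SM | exact: SX].
Qed.

Section TwosidedMaximal.
Variables (R : realType) (n : nat) (M : {mpoly (quat R)[n]} -> Prop).
Hypothesis hMx : is_maximal_left_ideal M.
Let hM : is_left_ideal M. Proof. by case: hMx. Qed.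

Lemma ideal_mpolyC_eq0 (c : quat R) : M c%:MP -> c = 0.
Proof.
move=> Mc; apply: contrapT => /eqP /quat_invl [y yc].
apply: (maximal_left_idealN1 hMx).
by rewrite -mpolyC1 -yc mpolyCM; apply: (left_idealMl hM).
Qed.

Lemma ideal_eq_left_ideal_gen (a : 'I_n -> R) :
  (forall i, M ('X_i - (qreal (a i))%:MP)) ->
  forall x, M x <-> left_ideal_gen (fun i => 'X_i - (qreal (a i))%:MP) x.
Proof.
move=> Ma x; have LM := left_ideal_gen_min hM Ma.
split => [Mx|/LM //].
have [c Lxc] := mpoly_congr_const (fun i => qreal_central (a i)) x.
suff /ideal_mpolyC_eq0 c0 : M c%:MP by rewrite c0 subr0 in Lxc.
by rewrite -[c%:MP](subKr x); apply: left_idealB Mx (LM _ Lxc).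
Qed.

Hypothesis hM2 : is_twosided_ideal M.

(* [d (X_i - c) - (X_i - c) d = c d - d c] because [X_i] is central. *)
Lemma ideal_X_sub_real (i : 'I_n) (c : quat R) :
  M ('X_i - c%:MP) -> c = qreal (q0 c).
Proof.
move=> Mc; apply: quat_center => d; apply/eqP; rewrite -subr_eq0; apply/eqP.
apply: ideal_mpolyC_eq0; rewrite mpolyCB !mpolyCM.
have <- : d%:MP * ('X_i - c%:MP) - ('X_i - c%:MP) * d%:MP =
          c%:MP * d%:MP - d%:MP * c%:MP.
  by rewrite mulrBr mulrBl commr_mpolyX opprB addrC addrA subrK.
by apply: (left_idealB hM); [exact: left_idealMl | exact: (twosided_idealMr hM2)].
Qed.

Lemma ideal_X_sub_root (i : 'I_n) (f : {poly R[i]}) :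
  f != 0 -> M (evalX i f) -> exists z, M ('X_i - (qcomplex z)%:MP).
Proof.
move=> f0; have [r ->] := closed_field_poly_normal f.
rewrite -mul_polyC rmorphM /= evalXC rmorph_prod /= => Mf.
have /(twosided_maximal_ideal_prime hMx hM2 Mf) : ~ M (qcomplex (lead_coef f))%:MP.
  by move=> /ideal_mpolyC_eq0 /eqP; rewrite fmorph_eq0 lead_coef_eq0 (negbTE f0).
by case/(twosided_maximal_ideal_prod hMx hM2) => z; rewrite evalX_XsubC; exists z.
Qed.

(* The combination equals [- sum_j c j (u j (X_i - a j) - 1) prod_(k != j) (X_i - a k)]. *)
Lemma ideal_lagrange_comb (i : 'I_n) (m : nat) (a c : 'I_m -> R) (u : 'I_m -> {mpoly (quat R)[n]}) :
  (forall j, M (u j * ('X_i - (qreal (a j))%:MP) - 1)) ->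
  \sum_j (qreal (c j))%:MP * u j = 0 ->
  M (evalX i (\sum_j (c j)%:C%C *: \prod_(k | k != j) ('X - (a k)%:C%C%:P))).
Proof.
move=> Mu cu0; rewrite raddf_sum /=.
pose p j := \prod_(k | k != j) ('X - (a k)%:C%C%:P).
have termE j : evalX i ((c j)%:C%C *: p j) =
    (qreal (c j))%:MP * u j * evalX i (\prod_k ('X - (a k)%:C%C%:P)) -
    (qreal (c j))%:MP * (u j * ('X_i - (qreal (a j))%:MP) - 1) * evalX i (p j).
  rewrite (bigD1 j) //= -/(p j) rmorphM -mul_polyC rmorphM /= evalXC evalX_XsubC.
  by rewrite !qcomplex_real [_ * (_ - 1)]mulrBr mulr1 [(_ * _ - _) * _]mulrBl opprB !mulrA subrKC.
rewrite (eq_bigr _ (fun j _ => termE j)) sumrB -mulr_suml cu0 mul0r sub0r.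
apply: (left_idealN hM); apply: (left_ideal_sum hM) => j _.
by apply: (twosided_idealMr hM2); apply: (left_idealMl hM).
Qed.

(* If no [X_i - a] lies in [M], each has an inverse [u a] modulo [M]; uncountably
   many [u a] share a size bound, so some of them are linearly dependent over the
   reals, and the dependence yields [f]. *)
Lemma ideal_algebraic_X (i : 'I_n) : exists2 f : {poly R[i]}, f != 0 & M (evalX i f).
Proof.
have [[a Ma]|NMa] := pselect (exists a, M ('X_i - (qreal a)%:MP)).
  by exists ('X - a%:C%C%:P); rewrite ?polyXsubC_eq0 // evalX_XsubC.
have /choice [u Mu] : forall a, exists u, M (u * ('X_i - (qreal a)%:MP) - 1).
  by move=> a; apply: (maximal_left_ideal_invl hMx) => Ma; apply: NMa; exists a.
have [N /infinite_set_injective Ninf] :=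
  uncountable_bounded_fiber (fun a => msize (u a)) (@real_uncountable R).
have [a a_inj sz_ua] := Ninf (#|{: 'X_{1..n < N}}| * 4).+1.
have [c c0 cu0] := @mpoly_bounded_lin_dep R n N (fun j => u (a j)) sz_ua.
have [j0 cj0] : exists j0, c 0 j0 != 0.
  apply: contrapT => /forallNP c0j; move/eqP: c0; apply; apply/rowP => j.
  by rewrite mxE; apply/eqP/negPn/negP/c0j.
eexists; last exact: ideal_lagrange_comb (fun j => Mu (a j)) cu0.
apply: (@lagrange_comb_neq0 _ _ _ _ j0); last by rewrite raddf_eq0 //; apply: complexI.
by move=> j k /complexI /a_inj.
Qed.

End TwosidedMaximal.

Theorem proposition4p7 (R : realType) (n : nat) (M : {mpoly (quat R)[n]} -> Prop) :
  is_twosided_ideal M -> is_maximal_left_ideal M ->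
  exists a : 'I_n -> R,
    forall x, M x <-> left_ideal_gen (fun i : 'I_n => 'X_i - (qreal (a i))%:MP) x.
Proof.
move=> hM2 hMx.
have /choice [a Ma] : forall i, exists a, M ('X_i - (qreal a)%:MP).
  move=> i; have [f f0 Mf] := ideal_algebraic_X hMx hM2 i.
  have [z Mz] := ideal_X_sub_root hMx hM2 f0 Mf.
  by exists (q0 (qcomplex z)); rewrite -(ideal_X_sub_real hMx hM2 Mz).
by exists a; apply: (ideal_eq_left_ideal_gen hMx).
Qed.
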